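(* Let $D\subseteq\mathbb{R}$, let $g:D\to\mathbb{R}$ be ordinal decreasing on $D$, let $a=\sup_{x\in D}(-g(x))$, and let $f$ be a real function that is ordinal decreasing up to $a$. Then the function $x\mapsto f(-g(x))$ is ordinal decreasing on $D$.
   Context: For a function $h$ defined on a set $E\subseteq\mathbb{R}$, a strictly decreasing sequence $x_1>x_2>\cdots$ in $E$ is $h$-bad if $h(x_1)>h(x_2)>\cdots$; $h$ is ordinal decreasing on $E$ if there is no infinite $h$-bad sequence in $E$. A function $f$ is ordinal decreasing up to $a$ if it is defined on $(-\infty,a]$ and is ordinal decreasing on $(-\infty,a]$. *)

From Stdlib Require Import Reals.
From Coquelicot Require Export Rbar Lub.
Export Stdlib.Reals.Reals.
Open Scope R_scope.

Definition h_bad (E : R -> Prop) (h : R -> R) (x : nat -> R) : Prop :=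
  (forall n, E (x n)) /\
  (forall n, x (S n) < x n) /\
  (forall n, h (x (S n)) < h (x n)).

Definition ordinal_decreasing (E : R -> Prop) (h : R -> R) : Prop :=
  ~ (exists x : nat -> R, h_bad E h x).

Definition ordinal_decreasing_up_to (f : R -> R) (a : Rbar) : Prop :=
  ordinal_decreasing (fun y => Rbar_le (Finite y) a) f.

From Stdlib Require Import Reals.
From Coquelicot Require Import Rbar Lub.
From Stdlib Require Import Classical ClassicalEpsilon Lia Lra.
Open Scope R_scope.

(* Along an (f o -g)-bad sequence the values of g are pairwise distinct, so
   they have a strictly monotone subsequence.  If g decreases along it, the
   subsequence is g-bad in D.  If g increases, the points -g(x) decrease, stay
   below a = sup (-g), and carry decreasing values of f: an f-bad sequence in
   (-oo, a]. *)

Lemma decreasing_lt (v : nat -> R) :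
  (forall n, v (S n) < v n) -> forall n m, (n < m)%nat -> v m < v n.
Proof.
  intros Hstep n m Hnm; induction Hnm as [|m _ IH].
  - apply Hstep.
  - specialize (Hstep m); lra.
Qed.

Lemma comp_decreasing_injective (h : R -> R) (u : nat -> R) :
  (forall n, h (u (S n)) < h (u n)) -> forall n m, (n < m)%nat -> u n <> u m.
Proof.
  intros Hdec n m Hnm Heq.
  pose proof (decreasing_lt (fun k => h (u k)) Hdec n m Hnm) as Hlt.
  cbn in Hlt; rewrite Heq in Hlt; lra.
Qed.

Lemma dependent_chain (Q : nat -> Prop) (rel : nat -> nat -> Prop) (n0 : nat) :
  Q n0 -> (forall n, Q n -> exists m, (n < m)%nat /\ Q m /\ rel n m) ->
  exists phi : nat -> nat,
    (forall k, (phi k < phi (S k))%nat) /\ (forall k, rel (phi k) (phi (S k))).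
Proof.
  intros H0 Hstep.
  assert (next : forall p : {n | Q n},
             {m | (proj1_sig p < m)%nat /\ Q m /\ rel (proj1_sig p) m}).
  { intros [n Hn]; apply constructive_indefinite_description, Hstep, Hn. }
  pose (step := fun p => exist Q (proj1_sig (next p)) (proj1 (proj2 (proj2_sig (next p))))).
  exists (fun k => proj1_sig (Nat.iter k step (exist Q n0 H0))).
  split; intro k; apply (proj2_sig (next _)).
Qed.

Lemma strict_monotone_subsequence (u : nat -> R) :
  (forall n m, (n < m)%nat -> u n <> u m) ->
  exists phi : nat -> nat, (forall k, (phi k < phi (S k))%nat) /\
    ((forall k, u (phi (S k)) < u (phi k)) \/ (forall k, u (phi k) < u (phi (S k)))).
Proof.
  intros Hinj.
  pose (peak := fun n => forall m, (n < m)%nat -> u m < u n).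
  destruct (classic (forall N, exists n, (N < n)%nat /\ peak n)) as [Hpeaks | Hfinite].
  - destruct (Hpeaks O) as [n0 [_ Hn0]].
    destruct (dependent_chain peak (fun n m => u m < u n) n0 Hn0) as [phi [Hphi Hdec]].
    + intros n Hn; destruct (Hpeaks n) as [m [Hnm Hm]].
      exists m; auto.
    + exists phi; auto.
  - apply not_all_ex_not in Hfinite as [N HN].
    destruct (dependent_chain (fun n => (N < n)%nat) (fun n m => u n < u m) (S N))
      as [phi [Hphi Hinc]].
    + lia.
    + intros n Hn.
      assert (Hnot : ~ peak n) by (intro Hp; apply HN; eauto).
      apply not_all_ex_not in Hnot as [m Hm]; apply imply_to_and in Hm as [Hnm Hum].
      exists m; split; [exact Hnm | split; [lia |]].
      specialize (Hinj n m Hnm); lra.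
    + exists phi; auto.
Qed.

Lemma h_bad_subsequence (E : R -> Prop) (h : R -> R) (x : nat -> R) (phi : nat -> nat) :
  h_bad E h x -> (forall k, (phi k < phi (S k))%nat) ->
  h_bad E h (fun k => x (phi k)).
Proof.
  intros (HE & Hx & Hhx) Hphi.
  repeat split; intro k.
  - apply HE.
  - apply decreasing_lt, Hphi; exact Hx.
  - apply (decreasing_lt (fun n => h (x n))), Hphi; exact Hhx.
Qed.

Theorem lemma3 (D : R -> Prop) (g f : R -> R) (a : Rbar)
  (Hg : ordinal_decreasing D g)
  (Ha : is_lub_Rbar (fun y => exists x, D x /\ y = - g x) a)
  (Hf : ordinal_decreasing_up_to f a) :
  ordinal_decreasing D (fun x => f (- g x)).
Proof.
  intros [x Hbad].
  destruct (strict_monotone_subsequence (fun n => g (x n))) as [phi [Hphi [Hdec | Hinc]]].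
  { apply (comp_decreasing_injective (fun y => f (- y))), Hbad. }
  - destruct (h_bad_subsequence _ _ _ _ Hbad Hphi) as (HD & Hx & _).
    apply Hg; exists (fun k => x (phi k)); repeat split; assumption.
  - destruct (h_bad_subsequence _ _ _ _ Hbad Hphi) as (HD & _ & Hfx).
    apply Hf; exists (fun k => - g (x (phi k))); repeat split.
    + intro k; apply (proj1 Ha); exists (x (phi k)); auto.
    + intro k; specialize (Hinc k); cbn in Hinc; lra.
    + exact Hfx.
Qed.
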